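(* For every countably infinite graph $G$ the following are equivalent: (i) for every nontrivial ideal $\mathcal{I}$ on $\mathbb{N}$, $G$ is $\mathcal{I}^+$-Ramsey; (ii) in the Rado coloring of $K_\mathbb{N}$ there is a monochromatic copy of $G$ whose vertex set belongs to $\mathrm{nwd}^+$; (iii) $G$ is finitely ruled, i.e. there is a finite set $S\subseteq V(G)$ such that $G-S$ has no finite dominating set.
   Context: $\mathbb{N}=\{1,2,\dots\}$ and $K_\mathbb{N}$ is the complete graph on $\mathbb{N}$; a copy of $G$ is a subgraph isomorphic to $G$, monochromatic if all its edges have the same color. An ideal on $\mathbb{N}$ is a family $\mathcal{I}$ of subsets closed under subsets and finite unions; it is nontrivial if $\mathbb{N}\notin\mathcal{I}$ and $\mathcal{I}$ contains all finite subsets of $\mathbb{N}$. $\mathcal{I}^+=\mathcal{P}(\mathbb{N})\setminus\mathcal{I}$. $G$ is $\mathcal{I}^+$-Ramsey if for every finite coloring of the edges of $K_\mathbb{N}$ there is a monochromatic copy of $G$ whose vertex set lies in $\mathcal{I}^+$. The Rado coloring $\rho$ assigns to the edge $\{s,t\}$ with $s<t$ the $s$-th bit (counting from the least significant bit, which is the 1st) of the binary expansion of $t$. The truncated binary expansion of $n$ is its binary expansion with the leading 1 removed. For $s,t\in\mathbb{N}$, $t$ extends $s$ if $s\le t$ and the truncated binary expansion of $s$ is a terminal (least-significant) segment of the truncated binary expansion of $t$; $\langle s\rangle$ is the set of $t$ extending $s$. $\mathrm{nwd}$ is the ideal of all $A\subseteq\mathbb{N}$ such that for every $s\in\mathbb{N}$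 there is $t$ extending $s$ with $A\cap\langle t\rangle=\emptyset$, and $\mathrm{nwd}^+=\mathcal{P}(\mathbb{N})\setminus\mathrm{nwd}$. A set $X\subseteq V(G)$ is dominating if every vertex outside $X$ has a neighbor in $X$. *)

(* The set N = {1,2,...} is represented by Stdlib's [positive]
   (binary, least-significant bit first), so binary expansions are native. *)
From Stdlib Require Import PArith NArith List.
Import ListNotations.
Open Scope positive_scope.

Definition pset := positive -> Prop.

Definition finite_pset (A : pset) : Prop :=
  exists l : list positive, forall x, A x -> In x l.

Definition is_ideal (I : pset -> Prop) : Prop :=
  (forall A B : pset, (forall x, A x -> B x) -> I B -> I A) /\
  (forall A B : pset, I A -> I B -> I (fun x => A x \/ B x)).

Definition nontrivial_ideal (I : pset -> Prop) : Prop :=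
  is_ideal I /\ ~ I (fun _ => True) /\ (forall A, finite_pset A -> I A).

Definition positive_set (I : pset -> Prop) (A : pset) : Prop := ~ I A.

Definition simple_graph {V : Type} (adj : V -> V -> Prop) : Prop :=
  (forall u v, adj u v -> adj v u) /\ (forall v, ~ adj v v).

Definition countably_infinite (V : Type) : Prop :=
  exists e : nat -> V, (forall m n, e m = e n -> m = n) /\ (forall v, exists n, e n = v).

(* A copy of G in K_N is given by an injective map f : V -> N (the subgraph
   with vertex set f(V) and edges {f u, f v} for adj u v).  Its vertex set: *)
Definition vertex_set {V : Type} (f : V -> positive) : pset :=
  fun n => exists v, f v = n.

(* a finite edge colouring of K_N with k colours: a symmetric colour function
   (the value on the diagonal is irrelevant) *)
Definition finite_coloring (k : nat) (c : positive -> positive -> nat) : Prop :=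
  (forall s t, s <> t -> (c s t < k)%nat) /\ (forall s t, c s t = c t s).

Definition mono_copy {V C : Type} (adj : V -> V -> Prop)
    (c : positive -> positive -> C) (f : V -> positive) : Prop :=
  (forall u v, f u = f v -> u = v) /\
  exists col : C, forall u v, adj u v -> c (f u) (f v) = col.

Definition IplusRamsey {V : Type} (adj : V -> V -> Prop) (I : pset -> Prop) : Prop :=
  forall (k : nat) (c : positive -> positive -> nat), finite_coloring k c ->
    exists f : V -> positive, mono_copy adj c f /\ positive_set I (vertex_set f).

(* Rado colouring: for s < t, the s-th bit of t (1st = least significant),
   i.e. bit with index s-1 *)
Definition rado (s t : positive) : bool :=
  if s <? t then Pos.testbit t (Pos.pred_N s)
  else Pos.testbit s (Pos.pred_N t).

Fixpoint trunc_bin (p : positive) : list bool :=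
  match p with
  | xH => []
  | xO q => false :: trunc_bin q
  | xI q => true :: trunc_bin q
  end.

Definition extends (s t : positive) : Prop :=
  s <= t /\ exists l, trunc_bin t = trunc_bin s ++ l.

Definition cone (s : positive) : pset := fun t => extends s t.

Definition nwd (A : pset) : Prop :=
  forall s, exists t, extends s t /\ (forall x, A x -> cone t x -> False).

Definition nwd_plus (A : pset) : Prop := ~ nwd A.

Definition finitely_ruled {V : Type} (adj : V -> V -> Prop) : Prop :=
  exists S : list V,
    forall X : list V, (forall x, In x X -> ~ In x S) ->
      exists v, ~ In v S /\ ~ In v X /\ (forall x, In x X -> ~ adj v x).

(* (i) => (ii) is immediate since nwd is a nontrivial ideal.
   (ii) => (iii): the image of the copy is dense in the cone above some word s;
   the finite set consists of the vertices with images at most |s| + 1, and a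
   vertex whose image extends s padded with a long block of the wrong colour has
   no neighbour in a given finite set X of other vertices.
   (iii) => (i): extend the dual filter of I to an ultrafilter U (via the
   ultrafilter lemma of mathcomp-analysis), pick a colour i0 such that U-almost
   every point sees U-almost every point in colour i0, and build the copy by a
   back-and-forth construction: forth steps place every vertex, back steps give
   a preimage to every point of a U-large set, using that G - S has no finite
   dominating set.  The image then contains a U-large set, so it is I-positive. *)
From Stdlib Require Import PArith NArith Arith List Lia Classical ClassicalEpsilon.
From mathcomp Require classical_sets filter.
Import ListNotations.
Local Open Scope nat_scope.

Record ultrafilter {T : Type} (U : (T -> Prop) -> Prop) : Prop := {
  uf_inter : forall A B, U A -> U B -> U (fun x => A x /\ B x);
  uf_superset : forall A B, (forall x, A x -> B x) -> U A -> U B;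
  uf_proper : ~ U (fun _ => False);
  uf_ultra : forall A, U A \/ U (fun x => ~ A x)
}.
Arguments uf_inter {T U}.
Arguments uf_superset {T U}.
Arguments uf_proper {T U}.
Arguments uf_ultra {T U}.

Module UltrafilterExistence.
Import classical_sets filter.

Lemma ideal_dual_ultrafilter (Id : pset -> Prop) : nontrivial_ideal Id ->
  exists U, ultrafilter U /\ forall A, Id A -> U (fun x => ~ A x).
Proof.
  intros [[Isub Iunion] [Ifull Ifin]].
  set (F := fun A : pset => Id (fun x => ~ A x)).
  assert (FF : ProperFilter F).
  { apply Build_ProperFilter.
    - intros H. apply Ifull. revert H. apply Isub. intros x _ Hx. exact Hx.
    - split.
      + apply Ifin. exists nil. intros x H. apply H. exact I.
      + intros A B HA HB. refine (Isub _ _ _ (Iunion _ _ HA HB)).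
        intros x Hx. destruct (classic (A x)) as [Ax|Ax]; [right|left]; auto.
        intros Bx. apply Hx. split; auto.
      + intros A B AB HA. refine (Isub _ _ _ HA).
        intros x Hx Ax. apply Hx, AB, Ax. }
  destruct (ultraFilterLemma FF) as [G [GU FG]].
  assert (GP : ProperFilter G) by (destruct GU; auto).
  exists G. split; [split|].
  - intros A B. exact (@filterI _ G _ A B).
  - intros A B AB. exact (filterS (F := G) AB).
  - exact (filter_not_empty G).
  - intros A. exact (in_ultra_setVsetC A GU).
  - intros A IdA. apply FG. apply (Isub _ _ (fun x H => NNPP _ H) IdA).
Qed.
End UltrafilterExistence.

Section UltrafilterFacts.
Context {T : Type} {U : (T -> Prop) -> Prop} (HU : ultrafilter U).

Lemma uf_nonempty (A : T -> Prop) : U A -> exists x, A x.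
Proof.
  intros HA. apply NNPP. intros Hempty. apply (uf_proper HU).
  apply (uf_superset HU A); auto. intros x Ax. apply Hempty. exists x; exact Ax.
Qed.

Lemma uf_full : U (fun _ => True).
Proof.
  destruct (uf_ultra HU (fun _ => False)) as [H|H].
  - exfalso. exact (uf_proper HU H).
  - apply (uf_superset HU _ _ (fun _ _ => Logic.I) H).
Qed.

Lemma uf_list_inter {X : Type} (l : list X) (P : X -> T -> Prop) :
  (forall x, In x l -> U (P x)) -> U (fun t => forall x, In x l -> P x t).
Proof.
  induction l as [|a l IH]; intros Hl.
  - apply (uf_superset HU _ _ (fun t _ x (Hx : In x []) => match Hx with end) uf_full).
  - apply (uf_superset HU (fun t => P a t /\ forall x, In x l -> P x t)).
    + intros t [Ha Hrest] x [<-|Hx]; auto.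
    + apply (uf_inter HU); [apply Hl; left; reflexivity|].
      apply IH. intros x Hx. apply Hl. right; exact Hx.
Qed.

Lemma uf_finite_cover (k : nat) (P : nat -> T -> Prop) (Q : T -> Prop) :
  U Q -> (forall t, Q t -> exists i, i < k /\ P i t) -> exists i, i < k /\ U (P i).
Proof.
  revert Q. induction k as [|k IH]; intros Q HQ Hcover.
  - destruct (uf_nonempty Q HQ) as [t Qt]. destruct (Hcover t Qt) as [i [Hi _]]. lia.
  - destruct (uf_ultra HU (P k)) as [Hk|Hnk]; [exists k; split; auto|].
    destruct (IH (fun t => Q t /\ ~ P k t)) as [i [Hi Ui]].
    + apply (uf_inter HU); assumption.
    + intros t [Qt Hnot]. destruct (Hcover t Qt) as [i [Hi Pi]].
      exists i. split; [|exact Pi].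
      destruct (Nat.eq_dec i k) as [->|]; [contradiction|lia].
    + exists i. split; [lia|exact Ui].
Qed.

Lemma uf_typical_color (k : nat) (c : T -> T -> nat) :
  (forall n, U (fun m => m <> n)) -> (forall s t, s <> t -> c s t < k) ->
  exists i0, U (fun n => U (fun m => c n m = i0)).
Proof.
  intros Hcof Hk.
  destruct (uf_finite_cover k (fun i n => U (fun m => c n m = i)) (fun _ => True)
              uf_full) as [i0 [_ Hi0]].
  - intros n _. apply (uf_finite_cover k (fun i m => c n m = i) _ (Hcof n)).
    intros m Hm. exists (c n m). split; auto.
  - exists i0. exact Hi0.
Qed.

End UltrafilterFacts.

Lemma list_filter_prop {X : Type} (P : X -> Prop) (l : list X) :
  exists l', forall x, In x l' <-> In x l /\ P x.
Proof.
  induction l as [|a l [l' Hl']].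
  - exists []. simpl. tauto.
  - destruct (classic (P a)) as [Pa|nPa].
    + exists (a :: l'). intros x. simpl. rewrite Hl'.
      split; [intros [<-|H]; tauto|intros [[<-|H] Px]; tauto].
    + exists l'. intros x. simpl. rewrite Hl'.
      split; [tauto|intros [[<-|H] Px]; tauto].
Qed.

Lemma list_bound {X : Type} (g : X -> nat) (l : list X) :
  exists M, forall x, In x l -> g x <= M.
Proof.
  induction l as [|a l [M HM]].
  - exists 0. intros x [].
  - exists (max (g a) M). intros x [<-|Hx]; [lia|]. specialize (HM x Hx). lia.
Qed.

Definition dom {V T : Type} (L : list (V * T)) (v : V) : Prop := exists m, In (v, m) L.
Definition img {V T : Type} (L : list (V * T)) (m : T) : Prop := exists v, In (v, m) L.

Definition partial_injection {V T : Type} (L : list (V * T)) : Prop :=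
  forall u m v n, In (u, m) L -> In (v, n) L -> (u = v <-> m = n).

Section ChainLimit.
Variables V T : Type.
Variable stage : nat -> list (V * T).
Hypothesis stage_incl : forall j, incl (stage j) (stage (S j)).
Hypothesis stage_inj : forall j, partial_injection (stage j).
Hypothesis stage_exhaust : forall v, exists j, dom (stage j) v.

Lemma stage_incl_le j j' : j <= j' -> incl (stage j) (stage j').
Proof.
  induction 1; [apply incl_refl|]. eapply incl_tran; eauto.
Qed.

Lemma common_stage p q j1 j2 : In p (stage j1) -> In q (stage j2) ->
  exists j, In p (stage j) /\ In q (stage j).
Proof.
  intros Hp Hq. exists (max j1 j2). split.
  - apply (stage_incl_le j1); [lia|exact Hp].
  - apply (stage_incl_le j2); [lia|exact Hq].
Qed.

Lemma chain_limit : exists f : V -> T,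
  (forall u v, f u = f v -> u = v) /\
  (forall u v, exists j, In (u, f u) (stage j) /\ In (v, f v) (stage j)) /\
  (forall j v m, In (v, m) (stage j) -> f v = m).
Proof.
  assert (Hgraph : forall v, exists m, exists j, In (v, m) (stage j)).
  { intros v. destruct (stage_exhaust v) as [j [m Hm]]. eauto. }
  set (f := fun v => proj1_sig (constructive_indefinite_description _ (Hgraph v))).
  assert (Hf : forall v, exists j, In (v, f v) (stage j)).
  { intros v. exact (proj2_sig (constructive_indefinite_description _ (Hgraph v))). }
  assert (Hpairs : forall u v, exists j, In (u, f u) (stage j) /\ In (v, f v) (stage j)).
  { intros u v. destruct (Hf u) as [j1 Hu], (Hf v) as [j2 Hv].
    exact (common_stage _ _ _ _ Hu Hv). }
  exists f. split; [|split; [exact Hpairs|]].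
  - intros u v E. destruct (Hpairs u v) as [j [Hu Hv]].
    exact (proj2 (stage_inj j _ _ _ _ Hu Hv) E).
  - intros j v m Hm. destruct (Hf v) as [j' Hv].
    destruct (common_stage _ _ _ _ Hv Hm) as [j'' [H1 H2]].
    exact (proj1 (stage_inj j'' _ _ _ _ H1 H2) eq_refl).
Qed.

End ChainLimit.

Section BackAndForth.
Variable V : Type.
Variable adj : V -> V -> Prop.
Hypothesis adj_sym : forall u v, adj u v -> adj v u.
Hypothesis adj_irrefl : forall v, ~ adj v v.
Variable core : list V.
Hypothesis core_rules : forall X : list V, (forall x, In x X -> ~ In x core) ->
  exists v, ~ In v core /\ ~ In v X /\ (forall x, In x X -> ~ adj v x).
Variable e : nat -> V.
Hypothesis e_onto : forall v, exists j, e j = v.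
Variable U : pset -> Prop.
Hypothesis HU : ultrafilter U.
Hypothesis U_cofinite : forall n, U (fun m => m <> n).
Variable c : positive -> positive -> nat.
Hypothesis c_sym : forall s t, c s t = c t s.
Variable i0 : nat.

Definition typical (n : positive) : Prop := U (fun m => c n m = i0).
Hypothesis typical_large : U typical.

Definition partial_embedding (L : list (V * positive)) : Prop :=
  partial_injection L /\ (forall u m, In (u, m) L -> typical m) /\
  (forall u m v n, In (u, m) L -> In (v, n) L -> adj u v -> c m n = i0).

Lemma embedding_snoc L w m :
  partial_embedding L -> ~ dom L w -> ~ img L m -> typical m ->
  (forall u n, In (u, n) L -> adj u w -> c n m = i0) ->
  partial_embedding (L ++ [(w, m)]).
Proof.
  intros [Hinj [Htyp Hcol]] Hw Hm Tm Hadj. split; [|split].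
  - intros u m1 v n1 I1 I2. apply in_app_or in I1, I2.
    destruct I1 as [I1|[E1|[]]]; destruct I2 as [I2|[E2|[]]].
    + eauto.
    + injection E2 as <- <-. split; intros <-; [destruct Hw|destruct Hm]; eexists; exact I1.
    + injection E1 as <- <-. split; intros <-; [destruct Hw|destruct Hm]; eexists; exact I2.
    + injection E1 as <- <-. injection E2 as <- <-. tauto.
  - intros u m1 I1. apply in_app_or in I1. destruct I1 as [I1|[E1|[]]]; eauto.
    injection E1 as <- <-. exact Tm.
  - intros u m1 v n1 I1 I2 Ha. apply in_app_or in I1, I2.
    destruct I1 as [I1|[E1|[]]]; destruct I2 as [I2|[E2|[]]].
    + eauto.
    + injection E2 as <- <-. eauto.
    + injection E1 as <- <-. rewrite c_sym. eauto.
    + injection E1 as <- <-. injection E2 as <- <-. destruct (adj_irrefl _ Ha).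
Qed.

(* Forth: any vertex can be added to the domain, since U-almost every point is
   typical, new, and of colour i0 with all the (typical) points already used. *)
Lemma extend_forth L w : partial_embedding L ->
  exists L', incl L L' /\ partial_embedding L' /\ dom L' w.
Proof.
  intros HL. destruct (classic (dom L w)) as [Hw|Hw].
  { exists L. split; [apply incl_refl|auto]. }
  set (good := fun m => typical m /\ forall p, In p L -> snd p <> m /\ c (snd p) m = i0).
  assert (Hgood : U good).
  { apply (uf_inter HU); [exact typical_large|].
    apply (uf_list_inter HU L (fun p m => snd p <> m /\ c (snd p) m = i0)).
    intros [u n] Hp. apply (uf_inter HU); [|exact (proj1 (proj2 HL) u n Hp)].
    apply (uf_superset HU _ _ (fun m H E => H (eq_sym E)) (U_cofinite n)). }
  destruct (uf_nonempty HU _ Hgood) as [m [Tm Hm]].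
  exists (L ++ [(w, m)]). split; [|split].
  - intros p Hp. apply in_or_app. left; exact Hp.
  - apply embedding_snoc; auto.
    + intros [u Hu]. exact (proj1 (Hm _ Hu) eq_refl).
    + intros u n Hu _. exact (proj2 (Hm _ Hu)).
  - exists m. apply in_or_app. right; left; reflexivity.
Qed.

Lemma extend_forth_all L ws : partial_embedding L ->
  exists L', incl L L' /\ partial_embedding L' /\ forall w, In w ws -> dom L' w.
Proof.
  revert L. induction ws as [|w ws IH]; intros L HL.
  - exists L. split; [apply incl_refl|split; [exact HL|intros w []]].
  - destruct (extend_forth L w HL) as [L1 [Hincl1 [HL1 Hw]]].
    destruct (IH L1 HL1) as [L2 [Hincl2 [HL2 Hws]]].
    exists L2. split; [eapply incl_tran; eauto|split; [exact HL2|]].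
    intros x [<-|Hx]; [|exact (Hws x Hx)].
    destruct Hw as [m Hm]. exists m. exact (Hincl2 _ Hm).
Qed.

Section FromBase.
Variable L0 : list (V * positive).
Hypothesis L0_embedding : partial_embedding L0.
Hypothesis L0_covers : forall s, In s core -> dom L0 s.

Definition compatible (n : positive) : Prop :=
  typical n /\ forall p, In p L0 -> c (snd p) n = i0.

Lemma compatible_large : U compatible.
Proof.
  apply (uf_inter HU); [exact typical_large|].
  apply (uf_list_inter HU L0 (fun p n => c (snd p) n = i0)).
  intros [u m] Hp. exact (proj1 (proj2 L0_embedding) u m Hp).
Qed.

(* Since G - core has no finite dominating set, some vertex outside core is new
   and has no neighbour among the vertices outside core used so far. *)
Lemma fresh_vertex (L : list (V * positive)) : exists v,
  ~ dom L v /\ ~ In v core /\ forall u m, In (u, m) L -> ~ In u core -> ~ adj v u.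
Proof.
  destruct (list_filter_prop (fun u => ~ In u core) (map fst L)) as [X HX].
  destruct (core_rules X) as [v [HvS [HvX Hv]]].
  { intros x Hx. exact (proj2 (proj1 (HX x) Hx)). }
  exists v. split; [|split; [exact HvS|]].
  - intros [m Hm]. apply HvX, HX. split; [|exact HvS].
    apply in_map_iff. exists (v, m). auto.
  - intros u m Hu HuS. apply Hv, HX. split; [|exact HuS].
    apply in_map_iff. exists (u, m). auto.
Qed.

(* Back: a compatible point can be added to the image, its preimage being a
   fresh vertex whose used neighbours all lie in core. *)
Lemma extend_back L n : partial_embedding L -> incl L0 L -> compatible n ->
  exists L', incl L L' /\ partial_embedding L' /\ img L' n.
Proof.
  intros HL HL0 [Tn Hn]. destruct (classic (img L n)) as [Himg|Himg].
  { exists L. split; [apply incl_refl|auto]. }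
  destruct (fresh_vertex L) as [v [Hv [HvS Hnadj]]].
  exists (L ++ [(v, n)]). split; [|split].
  - intros p Hp. apply in_or_app. left; exact Hp.
  - apply embedding_snoc; auto.
    intros u m Hu Ha. destruct (classic (In u core)) as [HuS|HuS].
    + destruct (L0_covers u HuS) as [m0 Hm0].
      assert (m0 = m) as <- by exact (proj1 (proj1 HL u m0 u m (HL0 _ Hm0) Hu) eq_refl).
      exact (Hn _ Hm0).
    + destruct (Hnadj u m Hu HuS). apply adj_sym, Ha.
  - exists v. apply in_or_app. right; left; reflexivity.
Qed.

(* Stage j+1 adds the vertex e j to the domain and, if compatible, the point
   j+1 to the image. *)
Definition extension_step (j : nat) (L L' : list (V * positive)) : Prop :=
  incl L L' /\ partial_embedding L' /\ dom L' (e j) /\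
  (compatible (Pos.of_succ_nat j) -> img L' (Pos.of_succ_nat j)).

Lemma extension_step_exists j L : partial_embedding L -> incl L0 L ->
  exists L', extension_step j L L'.
Proof.
  intros HL HL0. destruct (extend_forth L (e j) HL) as [L1 [Hincl1 [HL1 Hdom]]].
  destruct (classic (compatible (Pos.of_succ_nat j))) as [Hc|Hc].
  - destruct (extend_back L1 _ HL1 (incl_tran HL0 Hincl1) Hc) as [L2 [Hincl2 [HL2 Himg]]].
    exists L2. split; [eapply incl_tran; eauto|split; [exact HL2|split; [|auto]]].
    destruct Hdom as [m Hm]. exists m. exact (Hincl2 _ Hm).
  - exists L1. split; [exact Hincl1|split; [exact HL1|split; [exact Hdom|contradiction]]].
Qed.

Fixpoint stage (j : nat) : list (V * positive) :=
  match j with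
  | 0 => L0
  | S j => epsilon (inhabits L0) (extension_step j (stage j))
  end.

Lemma stage_spec j : partial_embedding (stage j) /\ incl L0 (stage j) /\
  extension_step j (stage j) (stage (S j)).
Proof.
  induction j as [|j [HL [HL0 Hstep]]].
  - split; [exact L0_embedding|split; [apply incl_refl|]].
    exact (epsilon_spec _ _ (extension_step_exists 0 L0 L0_embedding (incl_refl L0))).
  - destruct Hstep as [Hincl [HL' _]].
    assert (HL0' : incl L0 (stage (S j))) by (eapply incl_tran; eauto).
    split; [exact HL'|split; [exact HL0'|]].
    exact (epsilon_spec _ _ (extension_step_exists (S j) _ HL' HL0')).
Qed.

Lemma compatible_copy : exists f : V -> positive,
  (forall u v, f u = f v -> u = v) /\
  (forall u v, adj u v -> c (f u) (f v) = i0) /\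
  (forall n, compatible n -> exists v, f v = n).
Proof.
  destruct (chain_limit V positive stage) as [f [Hinj [Hpairs Hagree]]].
  - intros j. apply (stage_spec j).
  - intros j. apply (stage_spec j).
  - intros v. destruct (e_onto v) as [j <-]. exists (S j). apply (stage_spec j).
  - exists f. split; [exact Hinj|split].
    + intros u v Ha. destruct (Hpairs u v) as [j [Hu Hv]].
      exact (proj2 (proj2 (proj1 (stage_spec j))) _ _ _ _ Hu Hv Ha).
    + intros n Hn. set (j := Nat.pred (Pos.to_nat n)).
      assert (Ej : Pos.of_succ_nat j = n) by (apply Pos2Nat.inj; rewrite SuccNat2Pos.id_succ; lia).
      destruct (stage_spec j) as [_ [_ [_ [_ [_ Himg]]]]]. rewrite Ej in Himg.
      destruct (Himg Hn) as [v Hv]. exists v. exact (Hagree _ _ _ Hv).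
Qed.

End FromBase.

Lemma ruled_large_copy : exists f : V -> positive,
  (forall u v, f u = f v -> u = v) /\
  (forall u v, adj u v -> c (f u) (f v) = i0) /\
  exists B, U B /\ forall n, B n -> vertex_set f n.
Proof.
  assert (Hnil : partial_embedding []).
  { split; [|split]; intros until 1; contradiction. }
  destruct (extend_forth_all [] core Hnil) as [L0 [_ [HL0 Hcov]]].
  destruct (compatible_copy L0 HL0 Hcov) as [f [Hinj [Hcol Hcov']]].
  exists f. split; [exact Hinj|split; [exact Hcol|]].
  exists (compatible L0). split; [exact (compatible_large L0 HL0)|exact Hcov'].
Qed.

End BackAndForth.

Fixpoint of_bits (l : list bool) : positive :=
  match l with
  | [] => xH
  | false :: l => xO (of_bits l)
  | true :: l => xI (of_bits l)
  end.

Lemma trunc_of_bits l : trunc_bin (of_bits l) = l.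
Proof. induction l as [|[|] l IH]; simpl; congruence. Qed.

Lemma length_trunc_bin_lt p : length (trunc_bin p) < Pos.to_nat p.
Proof. induction p; simpl; lia. Qed.

Lemma prefix_le s t l : trunc_bin t = trunc_bin s ++ l -> (s <= t)%positive.
Proof.
  revert t. induction s as [s IH|s IH|]; intros t H; [| |lia];
    destruct t as [t|t|]; simpl in H; try discriminate;
    injection H as H; apply IH in H; lia.
Qed.

Lemma extends_iff s t : extends s t <-> exists l, trunc_bin t = trunc_bin s ++ l.
Proof.
  split; [intros [_ H]; exact H|]. intros [l H]. split; [exact (prefix_le s t l H)|eauto].
Qed.

Lemma extends_refl s : extends s s.
Proof. apply extends_iff. exists []. rewrite app_nil_r. reflexivity. Qed.

Lemma extends_trans s t u : extends s t -> extends t u -> extends s u.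
Proof.
  rewrite !extends_iff. intros [l1 H1] [l2 H2]. exists (l1 ++ l2).
  rewrite H2, H1, app_assoc. reflexivity.
Qed.

Lemma extends_of_bits s l : extends s (of_bits (trunc_bin s ++ l)).
Proof. apply extends_iff. exists l. apply trunc_of_bits. Qed.

Lemma cone_bound s l t : extends (of_bits (trunc_bin s ++ l)) t ->
  length (trunc_bin s) + length l < Pos.to_nat t.
Proof.
  intros [l' Ht]%extends_iff. rewrite trunc_of_bits in Ht.
  pose proof (length_trunc_bin_lt t) as Hlen.
  rewrite Ht, !length_app in Hlen. lia.
Qed.

(* nwd is a nontrivial ideal: finite sets are nowhere dense because they miss
   the cone above any sufficiently long word. *)
Lemma nwd_nontrivial : nontrivial_ideal nwd.
Proof.
  split; [split|split].
  - intros A B HAB HB s. destruct (HB s) as [t [Ht Hmiss]]. exists t.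
    split; [exact Ht|]. intros x Ax. apply Hmiss, HAB, Ax.
  - intros A B HA HB s. destruct (HA s) as [t1 [H1 D1]]. destruct (HB t1) as [t2 [H2 D2]].
    exists t2. split; [eapply extends_trans; eauto|].
    intros x [Ax|Bx] Cx; [apply (D1 x Ax); eapply extends_trans; eauto|exact (D2 x Bx Cx)].
  - intros H. destruct (H 1%positive) as [t [_ D]]. exact (D t Logic.I (extends_refl t)).
  - intros A [l Hl] s. destruct (list_bound Pos.to_nat l) as [M HM].
    exists (of_bits (trunc_bin s ++ repeat false M)). split; [apply extends_of_bits|].
    intros x Ax Cx. apply cone_bound in Cx. specialize (HM x (Hl x Ax)).
    rewrite repeat_length in Cx. lia.
Qed.

Lemma nwd_plus_dense (A : pset) : nwd_plus A ->
  exists s, forall t, extends s t -> exists x, A x /\ cone t x.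
Proof.
  intros HA. apply NNPP. intros Hno. apply HA. intros s. apply NNPP. intros Hs.
  apply Hno. exists s. intros t Hst. apply NNPP. intros Ht. apply Hs.
  exists t. split; [exact Hst|]. intros x Ax Cx. apply Ht. eauto.
Qed.

Lemma rado_sym s t : rado s t = rado t s.
Proof.
  unfold rado. destruct (Pos.ltb_spec s t), (Pos.ltb_spec t s); try lia; try reflexivity.
  replace t with s by lia. reflexivity.
Qed.

Lemma rado_lt x t : (x < t)%positive -> rado t x = Pos.testbit t (Pos.pred_N x).
Proof. intros H. unfold rado. destruct (Pos.ltb_spec t x); [lia|reflexivity]. Qed.

Lemma pred_N_of_succ_nat i : Pos.pred_N (Pos.of_succ_nat i) = N.of_nat i.
Proof. destruct i; simpl; [reflexivity|apply Pos.pred_N_succ]. Qed.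

Lemma testbit_trunc_bin n i : i < length (trunc_bin n) ->
  Pos.testbit n (N.of_nat i) = nth i (trunc_bin n) false.
Proof.
  revert i. induction n as [n IH|n IH|]; intros [|i] Hi; simpl in Hi |- *; try lia;
    try reflexivity; rewrite <- IH by lia; f_equal; apply pred_N_of_succ_nat.
Qed.

Lemma rado_padded_cone s b k t x :
  extends (of_bits (trunc_bin s ++ repeat b k)) t ->
  length (trunc_bin s) < Pos.to_nat x <= length (trunc_bin s) + k ->
  rado t x = b.
Proof.
  intros Ht Hx. pose proof (cone_bound _ _ _ Ht) as Hbound. rewrite repeat_length in Hbound.
  apply extends_iff in Ht. destruct Ht as [l Ht]. rewrite trunc_of_bits, <- app_assoc in Ht.
  set (L := length (trunc_bin s)) in *.
  assert (Hi : Pos.pred_N x = N.of_nat (Pos.to_nat x - 1)).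
  { rewrite <- pred_N_of_succ_nat. f_equal. apply Pos2Nat.inj.
    rewrite SuccNat2Pos.id_succ. lia. }
  rewrite rado_lt, Hi, testbit_trunc_bin by (try apply Pos2Nat.inj_lt;
    rewrite ?Ht, ?length_app, ?repeat_length; lia).
  rewrite Ht, app_nth2 by lia. fold L.
  rewrite app_nth1 by (rewrite repeat_length; lia).
  apply nth_repeat_lt. lia.
Qed.

Lemma injective_below_finite {V : Type} (f : V -> positive) :
  (forall u v, f u = f v -> u = v) ->
  forall b, exists l, forall v, In v l <-> Pos.to_nat (f v) <= b.
Proof.
  intros Hinj. induction b as [|b [l Hl]].
  - exists []. intros v. simpl. pose proof (Pos2Nat.is_pos (f v)). split; [tauto|lia].
  - destruct (classic (exists w, Pos.to_nat (f w) = S b)) as [[w Hw]|Hnone].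
    + exists (w :: l). intros v. simpl. rewrite Hl. split; [intros [<-|H]; lia|].
      intros Hv. destruct (Nat.eq_dec (Pos.to_nat (f v)) (S b)) as [E|E]; [|right; lia].
      left. apply Hinj, Pos2Nat.inj. congruence.
    + exists l. intros v. rewrite Hl. split; [lia|]. intros Hv.
      destruct (Nat.eq_dec (Pos.to_nat (f v)) (S b)) as [E|E]; [|lia].
      destruct Hnone. eauto.
Qed.

(* (i) => (ii): nwd is a nontrivial ideal and the Rado colouring is a
   2-colouring. *)
Lemma ramsey_implies_rado_copy (V : Type) (adj : V -> V -> Prop) :
  (forall I : pset -> Prop, nontrivial_ideal I -> IplusRamsey adj I) ->
  exists f : V -> positive, mono_copy adj rado f /\ nwd_plus (vertex_set f).
Proof.
  intros Hramsey.
  set (c := fun s t => if rado s t then 1 else 0).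
  assert (Hc : finite_coloring 2 c).
  { split; intros s t; unfold c; [destruct (rado s t); lia|now rewrite rado_sym]. }
  destruct (Hramsey nwd nwd_nontrivial 2 c Hc) as [f [[Hinj [col Hcol]] Hpos]].
  exists f. split; [split; [exact Hinj|]|exact Hpos].
  exists (Nat.eqb col 1). intros u v Ha. specialize (Hcol u v Ha). unfold c in Hcol.
  destruct (rado (f u) (f v)); subst col; reflexivity.
Qed.

(* (ii) => (iii): if the image is dense above s, take for the finite set the
   vertices with small images.  Given a finite X outside it, a vertex v whose
   image lies above s padded with long blocks of the opposite colour is new and
   gets the wrong colour with every vertex of X, so it has no neighbour in X. *)
Lemma rado_copy_implies_ruled (V : Type) (adj : V -> V -> Prop) :
  (exists f : V -> positive, mono_copy adj rado f /\ nwd_plus (vertex_set f)) ->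
  finitely_ruled adj.
Proof.
  intros [f [[Hinj [col Hcol]] Hpos]].
  destruct (nwd_plus_dense _ Hpos) as [s Hs].
  set (L := length (trunc_bin s)).
  destruct (injective_below_finite f Hinj (S L)) as [core Hcore].
  exists core. intros X HX.
  destruct (list_bound (fun x => Pos.to_nat (f x)) X) as [M HM].
  set (t := of_bits (trunc_bin s ++ repeat (negb col) (S M))).
  destruct (Hs t (extends_of_bits _ _)) as [n [[v <-] Hv]].
  pose proof (cone_bound _ _ _ Hv) as Hbound. rewrite repeat_length in Hbound. fold L in Hbound.
  exists v. split; [|split].
  - rewrite Hcore. lia.
  - intros HvX. specialize (HM v HvX). simpl in HM. lia.
  - intros x Hx Ha. specialize (HM x Hx). simpl in HM.
    assert (HxS : ~ Pos.to_nat (f x) <= S L) by (rewrite <- Hcore; exact (HX x Hx)).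
    assert (Hwindow : L < Pos.to_nat (f x) <= L + S M) by lia.
    pose proof (rado_padded_cone s (negb col) (S M) (f v) (f x) Hv Hwindow) as Hrado.
    rewrite (Hcol v x Ha) in Hrado. destruct col; discriminate.
Qed.

(* (iii) => (i): extend the dual filter of I to an ultrafilter U, choose a
   colour i0 typical for U, and run the back-and-forth construction; its image
   contains a U-large set, hence is not in I. *)
Lemma ruled_implies_ramsey (V : Type) (adj : V -> V -> Prop) :
  simple_graph adj -> countably_infinite V -> finitely_ruled adj ->
  forall I : pset -> Prop, nontrivial_ideal I -> IplusRamsey adj I.
Proof.
  intros [Hsym Hirr] [e [_ He]] [core Hcore] I HI k c [Hk Hcsym].
  destruct (UltrafilterExistence.ideal_dual_ultrafilter I HI) as [U [HU HIU]].
  assert (Hcof : forall n, U (fun m => m <> n)).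
  { intros n. apply HIU, (proj2 (proj2 HI)). exists [n]. intros x Hx. left; auto. }
  destruct (uf_typical_color HU k c Hcof Hk) as [i0 Hi0].
  destruct (ruled_large_copy V adj Hsym Hirr core Hcore e He U HU Hcof c Hcsym i0 Hi0)
    as [f [Hinj [Hcol [B [HB HBf]]]]].
  exists f. split; [split; [exact Hinj|exists i0; exact Hcol]|].
  intros Himg. apply (uf_proper HU).
  apply (uf_superset HU _ _ (fun n H => proj1 H (HBf n (proj2 H)))).
  exact (uf_inter HU _ _ (HIU _ Himg) HB).
Qed.

Theorem mainTheorem16 (V : Type) (adj : V -> V -> Prop) :
  simple_graph adj -> countably_infinite V ->
  ((forall I : pset -> Prop, nontrivial_ideal I -> IplusRamsey adj I) <->
   (exists f : V -> positive, mono_copy adj rado f /\ nwd_plus (vertex_set f))) /\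
  ((exists f : V -> positive, mono_copy adj rado f /\ nwd_plus (vertex_set f)) <->
   finitely_ruled adj).
Proof.
  intros Hg Hc.
  assert (Hii_iii := rado_copy_implies_ruled V adj).
  assert (Hiii_i := ruled_implies_ramsey V adj Hg Hc).
  assert (Hi_ii := ramsey_implies_rado_copy V adj).
  split; split; auto.
Qed.
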